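(* Let $R$ be an algebra over a field $\mathbb{F}$ with more than two elements. Then $R$ is of right invariant module type if and only if every indecomposable right $R$-module is automorphism-invariant.
   Context: Algebras are associative with identity; modules are unital right modules. $E(M)$ denotes the injective hull of $M$. A module $M$ is quasi-injective if every homomorphism from a submodule of $M$ to $M$ extends to an endomorphism of $M$. A module $M$ is automorphism-invariant if $\sigma(M)\subseteq M$ for every automorphism $\sigma$ of $E(M)$. A ring $R$ is of right invariant module type if every indecomposable right $R$-module is quasi-injective. *)

From HB Require Import structures.
From mathcomp Require Import all_boot all_order all_algebra.
Set Implicit Arguments. Unset Strict Implicit. Unset Printing Implicit Defensive.
Import GRing.Theory.
Local Open Scope ring_scope.

(* Convention: a unital right R-module is a left module over the converse
   ring R^c; for m : M and r : R, the right action m.r is (r : R^c) *: m. *)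
Notation rmodType R := (lmodType (R^c)%type).

Section ModuleNotions.
Variable R : pzRingType.

Definition ract (M : rmodType R) (m : M) (r : R) : M := (r : R^c) *: m.

Definition is_submodule (M : rmodType R) (S : pred M) : Prop :=
  [/\ 0 \in S, (forall x y, x \in S -> y \in S -> x + y \in S)
    & (forall x r, x \in S -> ract x r \in S)].

Definition hom_on (M N : rmodType R) (S : pred M) (f : M -> N) : Prop :=
  (forall x y, x \in S -> y \in S -> f (x + y) = f x + f y) /\
  (forall x r, x \in S -> f (ract x r) = ract (f x) r).

Definition quasi_injective (M : rmodType R) : Prop :=
  forall (S : pred M) (f : M -> M), is_submodule S -> hom_on S f ->
  exists g : {linear M -> M}, forall x, x \in S -> g x = f x.

Definition injective_module (E : rmodType R) : Prop :=
  forall (A B : rmodType R) (f : {linear A -> B}) (g : {linear A -> E}),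
  injective f -> exists h : {linear B -> E}, forall a, h (f a) = g a.

Definition essential_mono (M E : rmodType R) (i : {linear M -> E}) : Prop :=
  injective i /\
  forall S : pred E, is_submodule S -> (exists2 x, x \in S & x != 0) ->
    exists m, i m \in S /\ i m != 0.

Definition injective_hull (M E : rmodType R) (i : {linear M -> E}) : Prop :=
  injective_module E /\ essential_mono i.

Definition automorphism_invariant (M : rmodType R) : Prop :=
  forall (E : rmodType R) (i : {linear M -> E}), injective_hull i ->
  forall sigma : {linear E -> E}, bijective sigma ->
  forall m : M, exists m' : M, sigma (i m) = i m'.

Definition indecomposable (M : rmodType R) : Prop :=
  (exists x : M, x != 0) /\
  forall A B : pred M, is_submodule A -> is_submodule B ->
    (forall x, x \in A -> x \in B -> x = 0) ->
    (forall x, exists a b, [/\ a \in A, b \in B & x = a + b]) ->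
    (forall a, a \in A -> a = 0) \/ (forall b, b \in B -> b = 0).

Definition right_invariant_module_type : Prop :=
  forall M : rmodType R, indecomposable M -> quasi_injective M.

End ModuleNotions.

From HB Require Import structures.
From mathcomp Require Import all_boot all_order all_algebra.
From mathcomp Require Import boolp classical_sets.
Set Implicit Arguments. Unset Strict Implicit. Unset Printing Implicit Defensive.
Import GRing.Theory.
Local Open Scope classical_set_scope.
Local Open Scope ring_scope.

(* Fix an injective hull i : M -> E.
   (->) A quasi-injective M is stable under every endomorphism of E.
   (<-) Pick c in F with c <> 0, 1.  The projection onto A of a decomposition
   E = A + B is (sigma - c)/(1 - c), sigma being the automorphism equal to 1
   on A and c on B; so it preserves i(M) and induces a decomposition of M,
   whence E is indecomposable.  Then E is uniform and its monomorphisms are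
   automorphisms, so for any endomorphism tau either tau or tau - 1 is an
   automorphism; either way tau preserves i(M), and this invariance under all
   endomorphisms of E is equivalent to quasi-injectivity of M. *)

Lemma subr_swap (V : zmodType) (a b c d : V) : a + b = c + d -> c - a = b - d.
Proof. by move=> e; apply/eqP; rewrite subr_eq addrAC (addrC b) e addrK. Qed.

Section RightModules.
Variable R : pzRingType.
Implicit Types (M U V : rmodType R).

Lemma ractDl M (x y : M) r : ract (x + y) r = ract x r + ract y r.
Proof. exact: scalerDr. Qed.
Lemma ractDr M (x : M) r s : ract x (r + s) = ract x r + ract x s.
Proof. exact: scalerDl. Qed.
Lemma ractA M (x : M) r s : ract (ract x r) s = ract x (r * s).
Proof. exact: scalerA. Qed.
Lemma ract1 M (x : M) : ract x 1 = x.
Proof. exact: scale1r. Qed.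
Lemma ractr0 M (x : M) : ract x 0 = 0.
Proof. exact: scale0r. Qed.
Lemma ract0 M r : ract (0 : M) r = 0.
Proof. exact: scaler0. Qed.
Lemma ractN1 M (x : M) : ract x (-1) = - x.
Proof. exact: scaleN1r. Qed.
Lemma ractB M (x y : M) r : ract (x - y) r = ract x r - ract y r.
Proof. exact: scalerBr. Qed.
Lemma ractBr M (x : M) r s : ract x (r - s) = ract x r - ract x s.
Proof. exact: scalerBl. Qed.

Lemma linZ U V (f : {linear U -> V}) x r : f (ract x r) = ract (f x) r.
Proof. exact: linearZ. Qed.

Definition is_rhom U V (f : U -> V) : Prop :=
  (forall x y, f (x + y) = f x + f y) /\ (forall x r, f (ract x r) = ract (f x) r).

Lemma is_rhom_linear U V (f : U -> V) : is_rhom f ->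
  forall (a : R^c) u v, f (a *: u + v) = a *: f u + f v.
Proof. by move=> [fD fZ] a u v; rewrite fD; congr (_ + _); apply: fZ. Qed.

Definition rlin U V (f : U -> V) (fH : is_rhom f) : {linear U -> V} :=
  HB.pack f (GRing.isLinear.Build _ _ _ _ f (is_rhom_linear fH)).

(* Submodules are handled as sets, which is what Zorn's lemma works with;
   [predS X] turns them into the boolean predicates of the definitions. *)
Definition submod M (X : set M) : Prop :=
  [/\ X 0, forall x y, X x -> X y -> X (x + y) & forall x r, X x -> X (ract x r)].

Definition predS M (X : set M) : pred M := fun x => `[< X x >].

Lemma in_predS M (X : set M) x : x \in predS X <-> X x.
Proof. by rewrite unfold_in; split => /asboolP. Qed.

Section SubmodClosure.
Variables (M : rmodType R) (X : set M) (sX : submod X).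

Lemma submod0 : X 0. Proof. by case: sX. Qed.
Lemma submodD {x y} : X x -> X y -> X (x + y). Proof. by case: sX => _ + _; apply. Qed.
Lemma submodZ {x} r : X x -> X (ract x r). Proof. by case: sX => _ _; apply. Qed.
Lemma submodN {x} : X x -> X (- x). Proof. by rewrite -ractN1; apply: submodZ. Qed.
Lemma submodB {x y} : X x -> X y -> X (x - y).
Proof. by move=> Xx Xy; apply: submodD Xx (submodN Xy). Qed.

Lemma is_submodule_predS : is_submodule (predS X).
Proof.
split; first exact/in_predS/submod0.
- by move=> x y /in_predS Xx /in_predS Xy; apply/in_predS/submodD.
- by move=> x r /in_predS Xx; apply/in_predS/submodZ.
Qed.
End SubmodClosure.

Lemma submod_pred M (S : pred M) : is_submodule S -> submod (fun x => x \in S).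
Proof. by case=> S0 SD SZ; split. Qed.

Lemma submod_chain M (C : set (set M)) :
  C `<=` @submod M -> total_on C subset -> (exists X, C X) ->
  submod (\bigcup_(X in C) X).
Proof.
move=> CS tot [X0 CX0]; split; first by exists X0 => //; exact: submod0 (CS _ CX0).
- move=> x y [X CX Xx] [Y CY Yy].
  have [XY|YX] := tot _ _ CX CY; [exists Y | exists X] => //.
    exact: (submodD (CS _ CY) (XY _ Xx) Yy).
  exact: (submodD (CS _ CX) Xx (YX _ Yy)).
- move=> x r [X CX Xx]; exists X => //.
  exact: (submodZ (CS _ CX) _ Xx).
Qed.

Lemma submod_kernel U V (f : {linear U -> V}) : submod (fun x => f x = 0).
Proof.
split; first exact: linear0.
- by move=> x y; rewrite linearD => -> ->; rewrite addr0.
- by move=> x r; rewrite linZ => ->; rewrite ract0.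
Qed.

Lemma submod_image U V (f : {linear U -> V}) : submod (fun y => exists x, y = f x).
Proof.
split; first by exists 0; rewrite linear0.
- by move=> _ _ [x ->] [y ->]; exists (x + y); rewrite linearD.
- by move=> _ r [x ->]; exists (ract x r); rewrite linZ.
Qed.

Lemma is_submodule_preimage U V (f : {linear U -> V}) (S : pred V) :
  is_submodule S -> is_submodule (fun u => f u \in S : bool).
Proof.
move=> /submod_pred sS; split; rewrite ?unfold_in /= ?linear0; first exact: (submod0 sS).
- by move=> x y; rewrite !unfold_in /= linearD; apply: (submodD sS).
- by move=> x r; rewrite !unfold_in /= linZ; apply: (submodZ sS).
Qed.

Lemma ker0_injective U V (f : {linear U -> V}) :
  (forall x, f x = 0 -> x = 0) -> injective f.
Proof.
by move=> f0 x y exy; apply/eqP; rewrite -subr_eq0; apply/eqP/f0; rewrite linearB exy subrr.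
Qed.

Lemma submod_cyclic M (y : M) : submod (fun z => exists r, z = ract y r).
Proof.
split; first by exists 0; rewrite ractr0.
- by move=> _ _ [r ->] [s ->]; exists (r + s); rewrite ractDr.
- by move=> _ s [r ->]; exists (r * s); rewrite ractA.
Qed.

Definition msum M (A B : set M) : set M := fun z => exists a b, [/\ A a, B b & z = a + b].

Lemma submod_msum M (A B : set M) : submod A -> submod B -> submod (msum A B).
Proof.
move=> sA sB; split.
- by exists 0, 0; rewrite addr0; split => //; apply: submod0.
- move=> _ _ [a [b [Aa Bb ->]]] [a' [b' [Aa' Bb' ->]]].
  by exists (a + a'), (b + b'); rewrite addrACA; split => //; apply: submodD.
- move=> _ r [a [b [Aa Bb ->]]]; exists (ract a r), (ract b r).
  by rewrite ractDl; split => //; apply: submodZ.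
Qed.

Lemma msum_projection M (A B : set M) : submod A -> submod B ->
  (forall z, A z -> B z -> z = 0) ->
  exists pa : M -> M, (forall a b, A a -> B b -> pa (a + b) = a) /\
                      hom_on (predS (msum A B)) pa.
Proof.
move=> sA sB AB.
have dec_uniq a b a' b' : A a -> B b -> A a' -> B b' -> a + b = a' + b' -> a = a'.
  move=> Aa Bb Aa' Bb' e; apply/eqP; rewrite -subr_eq0; apply/eqP/AB.
    exact: submodB.
  rewrite (subr_swap (esym e)); exact: submodB.
pose pa x := if pselect (msum A B x) is left e then projT1 (cid e) else 0.
have paE a b : A a -> B b -> pa (a + b) = a.
  move=> Aa Bb; rewrite /pa; case: pselect => [e|[]]; last by exists a, b.
  by case: (cid e) => a' /= [b' [Aa' Bb' e']]; apply: (dec_uniq a' b' a b).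
exists pa; split => //; split.
- move=> _ _ /in_predS[a [b [Aa Bb ->]]] /in_predS[a' [b' [Aa' Bb' ->]]].
  by rewrite addrACA !paE //; apply: submodD.
- move=> _ r /in_predS[a [b [Aa Bb ->]]].
  by rewrite ractDl !paE //; apply: submodZ.
Qed.

Definition essential_in M (X H : set M) : Prop :=
  forall y, H y -> y != 0 -> exists r, X (ract y r) /\ ract y r != 0.

Record subm M (S : pred M) := Subm { subval : M; subvalP : subval \in S }.

Lemma subm_ext M (S : pred M) (x y : subm S) : subval x = subval y -> x = y.
Proof.
by case: x y => x Sx [y Sy] /= exy; subst y; congr Subm; apply: bool_irrelevance.
Qed.

Definition submodule_of M (S : pred M) (HS : is_submodule S) := subm S.
End RightModules.

HB.instance Definition _ (R : pzRingType) (M : rmodType R) (S : pred M)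
  (HS : is_submodule S) := gen_eqMixin (submodule_of HS).
HB.instance Definition _ (R : pzRingType) (M : rmodType R) (S : pred M)
  (HS : is_submodule S) := gen_choiceMixin (submodule_of HS).

Section SubmoduleType.
Variables (R : pzRingType) (M : rmodType R) (S : pred M) (HS : is_submodule S).
Let sS := submod_pred HS.

Definition subm_zero : submodule_of HS := Subm (submod0 sS).
Definition subm_add (x y : submodule_of HS) : submodule_of HS :=
  Subm (submodD sS (subvalP x) (subvalP y)).
Definition subm_opp (x : submodule_of HS) : submodule_of HS :=
  Subm (submodN sS (subvalP x)).
Definition subm_scale (r : R^c) (x : submodule_of HS) : submodule_of HS :=
  Subm (submodZ sS r (subvalP x)).

Lemma subm_addA : associative subm_add.
Proof. by move=> x y z; apply: subm_ext; rewrite /= addrA. Qed.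
Lemma subm_addC : commutative subm_add.
Proof. by move=> x y; apply: subm_ext; rewrite /= addrC. Qed.
Lemma subm_add0 : left_id subm_zero subm_add.
Proof. by move=> x; apply: subm_ext; rewrite /= add0r. Qed.
Lemma subm_addN : left_inverse subm_zero subm_opp subm_add.
Proof. by move=> x; apply: subm_ext; rewrite /= addNr. Qed.

HB.instance Definition _ :=
  GRing.isZmodule.Build (submodule_of HS) subm_addA subm_addC subm_add0 subm_addN.

Lemma subm_scaleA a b v : subm_scale a (subm_scale b v) = subm_scale (a * b) v.
Proof. by apply: subm_ext; rewrite /= ractA. Qed.
Lemma subm_scale1 : left_id 1 subm_scale.
Proof. by move=> x; apply: subm_ext; rewrite /= ract1. Qed.
Lemma subm_scaleDr : right_distributive subm_scale +%R.
Proof. by move=> a x y; apply: subm_ext; rewrite /= ractDl. Qed.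
Lemma subm_scaleDl v : {morph subm_scale^~ v: a b / a + b}.
Proof. by move=> a b; apply: subm_ext; rewrite /= ractDr. Qed.

HB.instance Definition _ := GRing.Zmodule_isLmodule.Build (R^c)%type
  (submodule_of HS) subm_scaleA subm_scale1 subm_scaleDr subm_scaleDl.

Definition subm_incl : {linear submodule_of HS -> M} :=
  @rlin _ (submodule_of HS) M (@subval _ _ _) (conj (fun _ _ => erefl) (fun _ _ => erefl)).

Lemma subm_incl_inj : injective subm_incl.
Proof. by move=> x y; apply: subm_ext. Qed.
End SubmoduleType.

Lemma Zorn_nonempty T (P : set (set T)) :
  (forall C : set (set T), C `<=` P -> total_on C subset ->
     (exists X, C X) -> P (\bigcup_(X in C) X)) ->
  (exists X, P X /\ exists t, X t) ->
  exists A, P A /\ forall B, A `<=` B -> P B -> B `<=` A.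
Proof.
move=> Pchain [X0 [PX0 [t0 X0t0]]].
pose P' X := P X \/ X = set0.
have [|A [P'A Amax]] := @Zorn_bigcup T P'.
  move=> C CP' tot.
  have [[X [CX [t Xt]]]|none] := pselect (exists X, C X /\ exists t, X t).
    pose C' Y := C Y /\ exists t, Y t.
    have -> : \bigcup_(Y in C) Y = \bigcup_(Y in C') Y.
      apply/seteqP; split => z [Y CY Yz]; last by exists Y => //; case: CY.
      by exists Y => //; split => //; exists z.
    left; apply: Pchain.
    - by move=> Y [CY [s Ys]]; case: (CP' _ CY) => // Y0; rewrite Y0 in Ys.
    - by move=> Y Z [CY _] [CZ _]; apply: tot.
    - by exists X; split => //; exists t.
  right; apply/seteqP; split => z // [Y CY Yz]; apply: none.
  by exists Y; split => //; exists z.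
have PA : P A.
  case: P'A => // A0; exfalso; apply: (Amax X0); last by left.
  rewrite A0; split => // H; exact: (H t0 X0t0).
exists A; split => // B AB PB; apply: contrapT => nBA.
by apply: (Amax B) => //; left.
Qed.

(* An idempotent endomorphism of an indecomposable module is 0 or the identity,
   since E is the direct sum of its image and its kernel. *)
Lemma indecomposable_idempotent (R : pzRingType) (E : rmodType R)
  (p : {linear E -> E}) : indecomposable E -> (forall x, p (p x) = p x) ->
  (forall x, p x = 0) \/ (forall x, p x = x).
Proof.
move=> [_ Eind] pp.
have pxK x : p (x - p x) = 0 by rewrite linearB pp subrr.
case: (Eind _ _ (is_submodule_predS (submod_image p))
               (is_submodule_predS (submod_kernel p))).
- by move=> _ /in_predS[y ->] /in_predS; rewrite pp.
- move=> x; exists (p x), (x - p x); split; last by rewrite addrC subrK.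
    by apply/in_predS; exists x.
  exact/in_predS.
- by move=> p0; left => x; apply/p0/in_predS; exists x.
- move=> p1; right => x; apply/eqP; rewrite eq_sym -subr_eq0; apply/eqP/p1.
  exact/in_predS.
Qed.

Section ScalarExtension.
Variables (F : fieldType) (R : algType F).
Implicit Types (M : rmodType R) (k : F).

Lemma algM k k' : (k * k')%:A = k%:A * k'%:A :> R.
Proof. by rewrite -scalerAl mul1r scalerA. Qed.

Lemma ract_comm M (x : M) k r : ract (ract x r) k%:A = ract (ract x k%:A) r.
Proof. by rewrite !ractA mulr_algr mulr_algl. Qed.

Lemma ractVK M (x : M) k : k != 0 -> ract (ract x k%:A) k^-1%:A = x.
Proof. by move=> k0; rewrite ractA -algM mulfV // scale1r ract1. Qed.

(* Every F-linear map g : A -> M extends along a monomorphism f : A -> B to an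
   F-linear map B -> M: vector spaces over a field are injective.  The
   extension is a maximal partial extension, found by Zorn's lemma on graphs. *)
Section FLinearExtension.
Variables (A B M : rmodType R) (f : {linear A -> B}) (finj : injective f).
Variables (g : A -> M) (gD : forall x y, g (x + y) = g x + g y)
  (gZ : forall x k, g (ract x k%:A) = ract (g x) k%:A).

Definition extension_graph (G : set (B * M)) : Prop :=
  [/\ forall b m m', G (b, m) -> G (b, m') -> m = m',
      forall b m b' m', G (b, m) -> G (b', m') -> G (b + b', m + m'),
      forall b m k, G (b, m) -> G (ract b k%:A, ract m k%:A)
    & forall a, G (f a, g a)].

Lemma extension_graph0 G : extension_graph G -> G (0, 0).
Proof. by case=> _ _ GZ GI; have := GZ _ _ 0 (GI 0); rewrite scale0r !ractr0. Qed.

Lemma extension_graph_chain (C : set (set (B * M))) :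
  C `<=` extension_graph -> total_on C subset -> (exists X, C X) ->
  extension_graph (\bigcup_(X in C) X).
Proof.
move=> CG tot [X0 CX0]; split.
- move=> b m m' [X CX Xb] [Y CY Yb].
  have [XY|YX] := tot _ _ CX CY.
    by case: (CG _ CY) => Gf _ _ _; apply: (Gf b) => //; apply: XY.
  by case: (CG _ CX) => Gf _ _ _; apply: (Gf b) => //; apply: YX.
- move=> b m b' m' [X CX Xb] [Y CY Yb].
  have [XY|YX] := tot _ _ CX CY; [exists Y | exists X] => //.
    by case: (CG _ CY) => _ GD _ _; apply: GD => //; apply: XY.
  by case: (CG _ CX) => _ GD _ _; apply: GD => //; apply: YX.
- move=> b m k [X CX Xb]; exists X => //.
  by case: (CG _ CX) => _ _ GZ _; apply: GZ.
- by move=> a; exists X0 => //; case: (CG _ CX0).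
Qed.

Lemma extension_graph_init : extension_graph (fun p => exists a, p = (f a, g a)).
Proof.
split.
- by move=> b m m' [a [-> ->]] [a' [/finj <- ->]].
- by move=> _ _ _ _ [a [-> ->]] [a' [-> ->]]; exists (a + a'); rewrite linearD gD.
- by move=> _ _ k [a [-> ->]]; exists (ract a k%:A); rewrite linZ gZ.
- by move=> a; exists a.
Qed.

Lemma extension_graph_adjoin G b : extension_graph G -> (forall m, ~ G (b, m)) ->
  extension_graph (fun p => exists d m k, G (d, m) /\ p = (d + ract b k%:A, m)).
Proof.
move=> [Gf GD GZ GI] nb.
have GN d m : G (d, m) -> G (- d, - m).
  by move=> Gdm; have := GZ _ _ (-1) Gdm; rewrite scaleN1r !ractN1.
split.
- move=> x m m' [d1 [m1 [k1 [G1 [-> ->]]]]] [d2 [m2 [k2 [G2 [e ->]]]]].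
  have [ek|nek] := eqVneq k1 k2.
    by move: e; rewrite ek => /addIr ed; apply: (Gf d1) => //; rewrite ed.
  exfalso; apply: (nb (ract (m2 - m1) (k1 - k2)^-1%:A)).
  have <- : ract (d2 - d1) (k1 - k2)^-1%:A = b.
    by rewrite (subr_swap e) -ractBr -scalerBl ractVK // subr_eq0.
  by apply: GZ; apply: GD G2 (GN _ _ G1).
- move=> _ _ _ _ [d1 [m1 [k1 [G1 [-> ->]]]]] [d2 [m2 [k2 [G2 [-> ->]]]]].
  exists (d1 + d2), (m1 + m2), (k1 + k2); split; first exact: GD.
  by rewrite scalerDl ractDr addrACA.
- move=> _ _ k [d1 [m1 [k1 [G1 [-> ->]]]]].
  exists (ract d1 k%:A), (ract m1 k%:A), (k1 * k); split; first exact: GZ.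
  by rewrite ractDl ractA -algM.
- move=> a; exists (f a), (g a), 0; split => //.
  by rewrite scale0r ractr0 addr0.
Qed.

Lemma extension_graph_total G : extension_graph G ->
  (forall H, G `<=` H -> extension_graph H -> H `<=` G) ->
  forall b, exists m, G (b, m).
Proof.
move=> eG Gmax b; apply: contrapT => nb.
have nbm m : ~ G (b, m) by move=> Gbm; apply: nb; exists m.
apply: (nbm 0); apply: (Gmax _ _ (extension_graph_adjoin eG nbm)).
- by move=> [d m] Gdm; exists d, m, 0; rewrite scale0r ractr0 addr0.
- exists 0, 0, 1; split; first exact: extension_graph0.
  by rewrite scale1r ract1 add0r.
Qed.

Lemma F_linear_extension : exists h : B -> M,
  [/\ forall x y, h (x + y) = h x + h y,
      forall x k, h (ract x k%:A) = ract (h x) k%:A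
    & forall a, h (f a) = g a].
Proof.
have [G [eG Gmax]] := @Zorn_nonempty _ extension_graph extension_graph_chain
  (ex_intro _ _ (conj extension_graph_init (ex_intro _ _ (ex_intro _ 0 erefl)))).
have tot := extension_graph_total eG Gmax.
pose h b := projT1 (cid (tot b)).
have hG b : G (b, h b) := projT2 (cid (tot b)).
case: eG => Gf GD GZ GI; exists h; split.
- by move=> x y; apply: (Gf (x + y)) => //; apply: GD.
- by move=> x k; apply: (Gf (ract x k%:A)) => //; apply: GZ.
- by move=> a; apply: (Gf (f a)).
Qed.
End FLinearExtension.
End ScalarExtension.

(* The coinduced module Hom_F(R, M) of F-linear maps R -> M, with the right
   action (phi . s)(r) = phi (s r). *)
Record coind (F : fieldType) (R : algType F) (M : rmodType R) := Coind {
  cophi : R -> M;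
  cophiD : forall r s, cophi (r + s) = cophi r + cophi s;
  cophiZ : forall (k : F) r, cophi (k%:A * r) = ract (cophi r) k%:A }.

HB.instance Definition _ (F : fieldType) (R : algType F) (M : rmodType R) :=
  gen_eqMixin (coind M).
HB.instance Definition _ (F : fieldType) (R : algType F) (M : rmodType R) :=
  gen_choiceMixin (coind M).

Section CoinducedModule.
Variables (F : fieldType) (R : algType F) (M : rmodType R).

Lemma coind_ext (x y : coind M) : cophi x =1 cophi y -> x = y.
Proof.
case: x y => u uD uZ [v vD vZ] /= /funext euv; subst v.
by congr Coind; apply: Prop_irrelevance.
Qed.

Definition coind_zero : coind M :=
  @Coind _ _ M (fun _ => 0) (fun _ _ => esym (addr0 0)) (fun _ _ => esym (ract0 _ _)).

Definition coind_add (x y : coind M) : coind M.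
Proof.
refine (@Coind _ _ M (fun r => cophi x r + cophi y r) _ _).
- by move=> r s; rewrite !cophiD addrACA.
- by move=> k r; rewrite !cophiZ ractDl.
Defined.

Definition coind_opp (x : coind M) : coind M.
Proof.
refine (@Coind _ _ M (fun r => - cophi x r) _ _).
- by move=> r s; rewrite cophiD opprD.
- by move=> k r; rewrite cophiZ; apply/esym/scalerN.
Defined.

Definition coind_scale (s : R^c) (x : coind M) : coind M.
Proof.
refine (@Coind _ _ M (fun r => cophi x ((s : R) * r)) _ _).
- by move=> r t; rewrite mulrDr cophiD.
- by move=> k r; rewrite -cophiZ !mulr_algl scalerAr.
Defined.

Lemma coind_addA : associative coind_add.
Proof. by move=> x y z; apply: coind_ext => r /=; rewrite addrA. Qed.
Lemma coind_addC : commutative coind_add.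
Proof. by move=> x y; apply: coind_ext => r /=; rewrite addrC. Qed.
Lemma coind_add0 : left_id coind_zero coind_add.
Proof. by move=> x; apply: coind_ext => r /=; rewrite add0r. Qed.
Lemma coind_addN : left_inverse coind_zero coind_opp coind_add.
Proof. by move=> x; apply: coind_ext => r /=; rewrite addNr. Qed.

HB.instance Definition _ :=
  GRing.isZmodule.Build (coind M) coind_addA coind_addC coind_add0 coind_addN.

Lemma coind_scaleA a b v : coind_scale a (coind_scale b v) = coind_scale (a * b) v.
Proof. by apply: coind_ext => r /=; rewrite mulrA. Qed.
Lemma coind_scale1 : left_id 1 coind_scale.
Proof. by move=> x; apply: coind_ext => r /=; rewrite mul1r. Qed.
Lemma coind_scaleDr : right_distributive coind_scale +%R.
Proof. by move=> a x y; apply: coind_ext. Qed.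
Lemma coind_scaleDl v : {morph coind_scale^~ v: a b / a + b}.
Proof. by move=> a b; apply: coind_ext => r /=; rewrite mulrDl cophiD. Qed.

HB.instance Definition _ := GRing.Zmodule_isLmodule.Build (R^c)%type (coind M)
  coind_scaleA coind_scale1 coind_scaleDr coind_scaleDl.

Lemma cophi_ract (x : coind M) s r : cophi (ract x s) r = cophi x (s * r).
Proof. by []. Qed.

Definition coind_lift (B : rmodType R) (G : B -> M)
  (GD : forall x y, G (x + y) = G x + G y)
  (GZ : forall x (k : F), G (ract x k%:A) = ract (G x) k%:A) (b : B) : coind M.
Proof.
refine (@Coind _ _ M (fun r => G (ract b r)) _ _).
- by move=> r s; rewrite ractDr GD.
- by move=> k r; rewrite -GZ ract_comm ractA.
Defined.

Lemma coind_lift_rhom (B : rmodType R) (G : B -> M) GD GZ :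
  is_rhom (@coind_lift B G GD GZ).
Proof.
by split=> [x y|x s]; apply: coind_ext => r /=; rewrite ?ractDl ?GD ?ractA.
Qed.

Definition coind_unit : {linear M -> coind M} :=
  rlin (@coind_lift_rhom M id (fun _ _ => erefl) (fun _ _ => erefl)).

Lemma coind_unit_inj : injective coind_unit.
Proof. by move=> x y /(congr1 (fun u => cophi u 1)); rewrite /= !ract1. Qed.

Lemma coind_injective : injective_module (coind M).
Proof.
move=> A B f g finj.
pose g1 (a : A) := cophi (g a) 1.
have g1D x y : g1 (x + y) = g1 x + g1 y by rewrite /g1 linearD.
have g1Z x (k : F) : g1 (ract x k%:A) = ract (g1 x) k%:A.
  by rewrite /g1 linZ cophi_ract mulr1 -cophiZ mulr1.
have [G [GD GZ Gf]] := F_linear_extension finj g1D g1Z.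
exists (rlin (coind_lift_rhom GD GZ)) => a; apply: coind_ext => r /=.
by rewrite -linZ Gf /g1 linZ cophi_ract mulr1.
Qed.
End CoinducedModule.

Section InjectiveModules.
Variables (R : pzRingType) (I : rmodType R) (Iinj : injective_module I).

Lemma injective_projection (H K : set I) : submod H -> submod K ->
  (forall z, H z -> K z -> z = 0) ->
  exists p : {linear I -> I}, (forall h, H h -> p h = h) /\ (forall k, K k -> p k = 0).
Proof.
move=> sH sK HK.
have [pa [paE [paD paZ]]] := msum_projection sH sK HK.
have sS := is_submodule_predS (submod_msum sH sK).
have pi_rhom : is_rhom (fun s : submodule_of sS => pa (subval s)).
  by split=> [s t|s r]; [apply: paD | apply: paZ]; exact: subvalP.
have [p pE] := @Iinj _ _ (subm_incl sS) (rlin pi_rhom) (@subm_incl_inj _ _ _ sS).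
have pS a b : H a -> K b -> p (a + b) = a.
  move=> Ha Kb; have Sab : a + b \in predS (msum H K) by apply/in_predS; exists a, b.
  by have := pE (Subm Sab); rewrite /= paE.
exists p; split => [h Hh|k Kk].
  by have := pS h 0 Hh (submod0 sK); rewrite addr0.
by have := pS 0 k (submod0 sH) Kk; rewrite add0r.
Qed.

Definition essential_extension (X H : set I) : Prop :=
  [/\ submod H, X `<=` H & essential_in X H].

Definition disjoint_submod (H K : set I) : Prop :=
  submod K /\ forall z, K z -> H z -> z = 0.

Lemma maximal_essential_extension (X : set I) : submod X ->
  exists H, essential_extension X H /\
    forall B, H `<=` B -> essential_extension X B -> B `<=` H.
Proof.
move=> sX; apply: Zorn_nonempty.
  move=> C CE tot [X0 CX0]; split.
  - by apply: submod_chain => // [Y /CE[]|]; last exists X0.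
  - by move=> x Xx; exists X0 => //; case: (CE _ CX0) => _ + _; apply.
  - move=> y [Y CY Yy] y0; case: (CE _ CY) => _ _ eY; exact: eY.
exists X; split; last by exists 0; exact: submod0.
by split => // y Xy y0; exists 1; rewrite ract1.
Qed.

Lemma maximal_disjoint_submod (H : set I) :
  exists K, disjoint_submod H K /\
    forall B, K `<=` B -> disjoint_submod H B -> B `<=` K.
Proof.
apply: Zorn_nonempty.
  move=> C CD tot [X0 CX0]; split.
  - by apply: submod_chain => // [Y /CD[]|]; last exists X0.
  - by move=> z [Y CY Yz] Hz; case: (CD _ CY) => _; apply.
exists [set 0]; split; last by exists 0.
split; last by move=> z ->.
split => //; first by move=> x y -> ->; rewrite addr0.
by move=> x r ->; rewrite ract0.
Qed.

(* If H is essential over X, K is a maximal submodule meeting H trivially,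
   and p is identity on H and zero on K, then the image of p is essential over X:
   a nonzero p x has a multiple in H, because K + xR meets H. *)
Lemma image_essential (X H K : set I) (p : {linear I -> I}) :
  essential_extension X H -> disjoint_submod H K ->
  (forall B, K `<=` B -> disjoint_submod H B -> B `<=` K) ->
  (forall h, H h -> p h = h) -> (forall k, K k -> p k = 0) ->
  essential_in X (fun y => exists x, y = p x).
Proof.
move=> [_ _ eH] [sK _] Kmax pH pK _ [x ->] px0.
pose Kx := msum K (fun z => exists r, z = ract x r).
have sKx : submod Kx := submod_msum sK (submod_cyclic x).
have KKx : K `<=` Kx.
  by move=> k Kk; exists k, 0; split => //; [exists 0; rewrite ractr0 | rewrite addr0].
have [z [Kxz Hz z0]] : exists z, [/\ Kx z, H z & z != 0].
  apply: contrapT => nz; move: px0; rewrite pK ?eqxx //.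
  apply: (Kmax Kx) => //; last first.
    by exists 0, x; split; [exact: submod0 | exists 1; rewrite ract1 | rewrite add0r].
  split => // z Kxz Hz; apply/eqP; apply: contrapT => z0; apply: nz.
  by exists z; split => //; apply/negP.
case: Kxz => k [_ [Kk [r ->] ez]].
have pz : z = ract (p x) r by rewrite -(pH _ Hz) ez linearD pK // add0r linZ.
have [r' [Xr' r'0]] := eH z Hz z0.
by exists (r * r'); rewrite -ractA -pz.
Qed.

Lemma essential_summand (X : set I) : submod X ->
  exists (H : set I) (p : {linear I -> I}),
  [/\ essential_extension X H, forall x, H (p x) & forall h, H h -> p h = h].
Proof.
move=> sX.
have [H [eH Hmax]] := maximal_essential_extension sX.
have [sH XH _] := eH.
have [K [[sK KH] Kmax]] := maximal_disjoint_submod H.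
have [p [pH pK]] := injective_projection sH sK (fun z Hz Kz => KH z Kz Hz).
have HIm : H `<=` (fun y => exists x, y = p x) by move=> h Hh; exists h; rewrite pH.
have ImH : (fun y => exists x, y = p x) `<=` H.
  apply: Hmax => //; split; first exact: submod_image.
    exact: subset_trans XH HIm.
  exact: image_essential eH (conj sK KH) Kmax pH pK.
by exists H, p; split => // x; apply: ImH; exists x.
Qed.

Lemma retract_injective (H : set I) (sH : is_submodule (predS H))
  (p : {linear I -> I}) : (forall x, H (p x)) -> (forall h, H h -> p h = h) ->
  injective_module (submodule_of sH).
Proof.
move=> pH pid A B f g finj.
have gL : is_rhom (fun a => subval (g a)) by split => [x y|x r]; rewrite ?linearD ?linZ.
have [h hE] := @Iinj _ _ f (rlin gL) finj.
have hP b : p (h b) \in predS H by apply/in_predS.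
have hL : is_rhom (fun b => Subm (hP b) : submodule_of sH).
  by split => [x y|x r]; apply: subm_ext; rewrite /= ?linearD ?linZ.
exists (rlin hL) => a; apply: subm_ext => /=.
by rewrite hE /=; apply: pid; apply/in_predS; exact: subvalP.
Qed.
End InjectiveModules.

Section InjectiveIndecomposable.
Variables (R : pzRingType) (E : rmodType R).
Hypotheses (Einj : injective_module E) (Eind : indecomposable E).

(* An injective endomorphism f has a retraction r; f r is idempotent and
   nonzero, hence the identity. *)
Lemma injective_endo_bijective (f : {linear E -> E}) : injective f -> bijective f.
Proof.
move=> finj; have [r rfK] := @Einj _ _ f idfun finj.
have pp x : (f \o r) ((f \o r) x) = (f \o r) x by rewrite /= rfK.
case: (indecomposable_idempotent Eind pp) => [p0|p1]; last by exists r.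
case: Eind => [[e e0] _]; exfalso; move/negP: e0; apply.
by apply/eqP/finj; rewrite linear0 -(p0 (f e)) /= rfK.
Qed.

(* E is uniform: two nonzero submodules meet nontrivially.  The essential
   summand of E generated by A must be all of E. *)
Lemma injective_indecomposable_uniform (A B : set E) : submod A -> submod B ->
  (exists2 a, A a & a != 0) -> (exists2 b, B b & b != 0) ->
  exists z, [/\ A z, B z & z != 0].
Proof.
move=> sA sB [a Aa a0] [b Bb b0].
have [H [p [[_ AH eH] pIm pid]]] := essential_summand Einj sA.
have pp x : p (p x) = p x by rewrite pid.
case: (indecomposable_idempotent Eind pp) => [p0|p1].
  by move: a0; rewrite -(pid _ (AH _ Aa)) p0 eqxx.
have [r [Ar r0]] := eH b (eq_ind _ H (pIm b) _ (p1 b)) b0.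
by exists (ract b r); split => //; exact: (submodZ sB r Bb).
Qed.
End InjectiveIndecomposable.

(* Every module has an injective hull: an essential summand of the coinduced
   module containing the image of M. *)
Lemma injective_hull_exists (F : fieldType) (R : algType F) (M : rmodType R) :
  exists (E : rmodType R) (i : {linear M -> E}), injective_hull i.
Proof.
have [H [p [[sH XH eH] pIm pid]]] :=
  essential_summand (@coind_injective _ _ M) (submod_image (coind_unit M)).
have sH' := is_submodule_predS sH.
have iP m : coind_unit M m \in predS H by apply/in_predS; apply: XH; exists m.
have iL : is_rhom (fun m => Subm (iP m) : submodule_of sH').
  split => [x y|x r]; apply: subm_ext; first exact: (linearD (coind_unit M)).
  exact: (linZ (coind_unit M)).
exists (submodule_of sH'), (rlin iL); split.
  exact: (retract_injective (@coind_injective _ _ M) pIm pid).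
split.
- by move=> x y /(congr1 (@subval _ _ _)) /=; exact: coind_unit_inj.
- move=> S HS [x xS x0].
  have Hx : H (subval x) by apply/in_predS; exact: subvalP.
  have x0' : subval x != 0 by apply: contra x0 => /eqP e; apply/eqP; exact: subm_ext.
  have [r [[m em] r0]] := eH _ Hx x0'.
  have e : rlin iL m = ract x r by apply: subm_ext; exact: (esym em).
  exists m; rewrite e; split; first exact: (submodZ (submod_pred HS)).
  by apply: contra r0 => /eqP e0; rewrite -[ract (subval x) r]/(subval (ract x r)) e0.
Qed.

Section HullInvariance.
Variables (R : pzRingType) (M E : rmodType R) (i : {linear M -> E}).
Hypothesis hull : injective_hull i.

Definition hull_invariant (tau : E -> E) : Prop := forall m, exists m', tau (i m) = i m'.

Lemma hull_submod_trivial (S : pred E) : is_submodule S ->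
  (forall m, i m \in S -> m = 0) -> forall y, y \in S -> y = 0.
Proof.
case: hull => _ [_ iess] HS S0 y yS; apply/eqP; apply: contrapT => /negP y0.
have [m [mS m0]] := iess S HS (ex_intro2 _ _ y yS y0).
by move/negP: m0; apply; rewrite (S0 m mS) linear0.
Qed.

(* A quasi-injective module is invariant under every endomorphism tau of its
   hull: tau restricted to K = {m | tau (i m) in i(M)} extends to g : M -> M,
   and (tau i - i g) m generates a submodule meeting i(M) trivially. *)
Lemma quasi_injective_endo_invariant : quasi_injective M ->
  forall tau : {linear E -> E}, hull_invariant tau.
Proof.
move=> qi tau; have [_ [iinj _]] := hull.
pose K m := exists m', tau (i m) = i m'.
have sK : submod K.
  split; first by exists 0; rewrite !linear0.
  - by move=> x y [a ea] [b eb]; exists (a + b); rewrite !linearD ea eb.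
  - by move=> x r [a ea]; exists (ract a r); rewrite !linZ ea.
pose fK x := if pselect (K x) is left e then projT1 (cid e) else 0.
have fKE x : K x -> tau (i x) = i (fK x).
  by move=> Kx; rewrite /fK; case: pselect => // e; case: (cid e).
have hom : hom_on (predS K) fK.
  split=> [x y /in_predS Kx /in_predS Ky|x r /in_predS Kx]; apply: iinj.
    by rewrite -fKE ?linearD ?fKE //; apply: (submodD sK).
  by rewrite -fKE ?linZ ?fKE //; apply: (submodZ sK).
have [g gE] := qi _ fK (is_submodule_predS sK) hom.
suff tig m : tau (i m) = i (g m) by move=> m; exists (g m).
apply/eqP; rewrite -subr_eq0; apply/eqP.
set y := _ - _; have sY := submod_cyclic y.
apply: (hull_submod_trivial (is_submodule_predS sY)); last first.
  by apply/in_predS; exists 1; rewrite ract1.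
move=> m0 /in_predS[r er].
have Kmr : K (ract m r).
  by exists (m0 + g (ract m r)); rewrite linearD er /y ractB -!linZ subrK.
apply: iinj; rewrite linear0 er /y ractB -!linZ fKE //.
by rewrite (gE _ (iffRL (in_predS _ _) Kmr)) subrr.
Qed.

(* Conversely, invariance under all endomorphisms of the hull gives
   quasi-injectivity: extend i f to the hull, then restrict to i(M). *)
Lemma endo_invariant_quasi_injective :
  (forall tau : {linear E -> E}, hull_invariant tau) -> quasi_injective M.
Proof.
move=> inv S f HS [fD fZ]; have [Einj [iinj _]] := hull.
have if_rhom : is_rhom (fun s : submodule_of HS => i (f (subval s))).
  by split=> [s t|s r]; rewrite (fD, fZ) ?(linearD, linZ) //; exact: subvalP.
have [h hE] := Einj _ _ _ (rlin if_rhom) (@subm_incl_inj _ _ _ HS).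
have [tau tE] := Einj _ _ _ h iinj.
pose g m := projT1 (cid (inv tau m)).
have gE m : tau (i m) = i (g m) := projT2 (cid (inv tau m)).
have g_rhom : is_rhom g.
  by split=> [x y|x r]; apply: iinj; rewrite -gE ?(linearD, linZ) ?gE.
exists (rlin g_rhom) => x xS; apply: iinj.
by rewrite [rlin g_rhom x]/= -gE tE; have := hE (Subm xS).
Qed.

(* If the hull is indecomposable, invariance under automorphisms implies
   invariance under all endomorphisms: a non-injective tau has a nonzero
   kernel, so by uniformity tau - 1 is injective, hence an automorphism. *)
Lemma indecomposable_hull_endo_invariant : indecomposable E ->
  automorphism_invariant M -> forall tau : {linear E -> E}, hull_invariant tau.
Proof.
move=> Eind ai tau; have [Einj _] := hull.
have ai_inj (sigma : {linear E -> E}) : injective sigma -> hull_invariant sigma.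
  by move=> sinj; apply: ai E i hull sigma (injective_endo_bijective Einj Eind sinj).
have [tau_ker0|/existsNP[z /not_implyP[tz /eqP z0]]] :=
  pselect (forall x, tau x = 0 -> x = 0).
  exact/ai_inj/ker0_injective.
have sinj : injective (tau \- idfun).
  apply: ker0_injective => w tw; apply: contrapT => /eqP w0.
  have [y [ty tyy]] := injective_indecomposable_uniform Einj Eind
    (submod_kernel tau) (submod_kernel (tau \- idfun))
    (ex_intro2 _ _ z tz z0) (ex_intro2 _ _ w tw w0).
  by move: tyy; rewrite /= ty sub0r => /eqP; rewrite oppr_eq0 => /eqP ->; rewrite eqxx.
move=> m; have [m1 e1] := ai_inj _ sinj m.
by exists (m1 + m); rewrite linearD -e1 /= subrK.
Qed.
End HullInvariance.

Lemma decomposition_projection (R : pzRingType) (E : rmodType R) (A B : pred E) :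
  is_submodule A -> is_submodule B -> (forall x, x \in A -> x \in B -> x = 0) ->
  (forall x, exists a b, [/\ a \in A, b \in B & x = a + b]) ->
  exists pa : {linear E -> E}, [/\ forall y, pa y \in A, forall y, y - pa y \in B
    & forall a b, a \in A -> b \in B -> pa (a + b) = a].
Proof.
move=> /submod_pred sA /submod_pred sB AB span.
have [pa [paE [paD paZ]]] := msum_projection sA sB AB.
have inS y : y \in predS (msum (fun x => x \in A) (fun x => x \in B)).
  by apply/in_predS; have [a [b [Aa Bb ->]]] := span y; exists a, b.
have pa_rhom : is_rhom pa by split=> [x y|x r]; [apply: paD | apply: paZ]; apply: inS.
exists (rlin pa_rhom); split => /= [y|y|//].
  by have [a [b [Aa Bb ->]]] := span y; rewrite paE.
by have [a [b [Aa Bb ->]]] := span y; rewrite paE // addrC addKr.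
Qed.

Section SummandScaling.
Variables (F : fieldType) (R : algType F) (E : rmodType R) (A B : pred E).
Hypothesis HB : is_submodule B.
Variable pa : {linear E -> E}.
Hypotheses (paA : forall y, pa y \in A) (paB : forall y, y - pa y \in B)
  (paE : forall a b, a \in A -> b \in B -> pa (a + b) = a).

Definition scale_summand (k : F) (y : E) : E := pa y + ract (y - pa y) k%:A.

Lemma scale_summand_rhom k : is_rhom (scale_summand k).
Proof.
split=> [x y|x r]; rewrite /scale_summand.
  by rewrite linearD opprD addrACA ractDl addrACA.
by rewrite linZ -ractB ract_comm -ractDl.
Qed.

Lemma pa_scale_summand k y : pa (scale_summand k y) = pa y.
Proof. by rewrite paE ?paA //; apply: (submodZ (submod_pred HB)); apply: paB. Qed.

Lemma scale_summandK k : k != 0 -> cancel (scale_summand k) (scale_summand k^-1).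
Proof.
move=> k0 y; rewrite {1}/scale_summand pa_scale_summand /scale_summand.
by rewrite addrAC subrr add0r ractVK // addrC subrK.
Qed.

Lemma scale_summand_bij k : k != 0 -> bijective (rlin (scale_summand_rhom k)).
Proof.
move=> k0; exists (scale_summand k^-1); first exact: scale_summandK.
by move=> y; have := scale_summandK (invr_neq0 k0) y; rewrite invrK.
Qed.

(* If M is automorphism-invariant with hull E, then i(M) is stable under pa:
   for c <> 0, 1, pa = (sigma - c) / (1 - c) with sigma = scale_summand c. *)
Lemma projection_hull_invariant (c : F) (M : rmodType R) (i : {linear M -> E}) :
  c != 0 -> c != 1 -> injective_hull i -> automorphism_invariant M ->
  hull_invariant i pa.
Proof.
move=> c0 c1 hull ai m.
have [m' em'] := ai E i hull _ (scale_summand_bij c0) m.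
exists (ract (m' - ract m c%:A) (1 - c)^-1%:A).
rewrite linZ linearB linZ -em' /= /scale_summand.
set y := i m.
have -> : pa y + ract (y - pa y) c%:A - ract y c%:A = ract (pa y) (1 - c)%:A.
  by rewrite ractB addrA addrAC addrK scalerBl scale1r ractBr ract1.
by rewrite ractVK // subr_eq0 eq_sym.
Qed.
End SummandScaling.

(* Over a field with an element c <> 0, 1, the injective hull of an
   indecomposable automorphism-invariant module is indecomposable: a
   decomposition E = A + B restricts, through the stable projection, to one
   of M. *)
Lemma hull_indecomposable (F : fieldType) (R : algType F) (c : F)
  (M E : rmodType R) (i : {linear M -> E}) : c != 0 -> c != 1 ->
  injective_hull i -> indecomposable M -> automorphism_invariant M ->
  indecomposable E.
Proof.
move=> c0 c1 hull [[x x0] Mind] ai; have [_ [iinj _]] := hull.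
split.
  by exists (i x); apply: contra x0 => /eqP ix0; apply/eqP/iinj; rewrite ix0 linear0.
move=> A B HA HB AB span.
have [pa [paA paB paE]] := decomposition_projection HA HB AB span.
have pa_inv := projection_hull_invariant HB paA paB paE c0 c1 hull ai.
case: (Mind _ _ (is_submodule_preimage i HA) (is_submodule_preimage i HB)).
- move=> m; rewrite !unfold_in /= => Am Bm.
  by apply: iinj; rewrite linear0; apply: AB.
- move=> m; have [m1 e1] := pa_inv m.
  exists m1, (m - m1); rewrite !unfold_in /= linearB -e1.
  by split; [exact: paA | exact: paB | rewrite addrC subrK].
- move=> A0; left; apply: (hull_submod_trivial hull HA) => m Am.
  by apply: A0; rewrite unfold_in.
- move=> B0; right; apply: (hull_submod_trivial hull HB) => m Bm.
  by apply: B0; rewrite unfold_in.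
Qed.

Lemma nontrivial_scalar (F : fieldType) :
  (exists a b c : F, [/\ a != b, a != c & b != c]) -> exists c : F, c != 0 /\ c != 1.
Proof.
move=> [a [b [d [ab ad bd]]]].
have [a01|/norP[]] := boolP ((a == 0) || (a == 1)); last by exists a.
have [b01|/norP[]] := boolP ((b == 0) || (b == 1)); last by exists b.
exists d; move: ab ad bd; case/orP: b01 => /eqP ->; case/orP: a01 => /eqP ->;
  by rewrite ?eqxx // => _ ? ?; split; rewrite eq_sym.
Qed.

Theorem corollary6 (F : fieldType) (R : algType F)
  (hF : exists a b c : F, [/\ a != b, a != c & b != c]) :
  right_invariant_module_type R <->
  (forall M : rmodType R, indecomposable M -> automorphism_invariant M).
Proof.
have [c [c0 c1]] := nontrivial_scalar hF.
split=> [rimt M Mind|ai M Mind].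
  move=> E i hull sigma _.
  exact: quasi_injective_endo_invariant hull (rimt M Mind) sigma.
have [E [i hull]] := injective_hull_exists M.
apply: (endo_invariant_quasi_injective hull).
apply: (indecomposable_hull_endo_invariant hull _ (ai M Mind)).
exact: hull_indecomposable c0 c1 hull Mind (ai M Mind).
Qed.
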